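(* Let $(X_1,T_1,\delta_1,\xi_1,\xi_1\nu_1),\ldots,(X_n,T_n,\delta_n,\xi_n,\xi_n\nu_n)$ be observations from the mixture cure model with partially known cure status described in the context, with distinct observed times, let $K_h(\cdot)=K(\cdot/h)/h$ for a kernel $K$ and bandwidth $h>0$, let $B_{hi}(x)=K_h(x-X_i)/\sum_{j=1}^n K_h(x-X_j)$ be the Nadaraya–Watson weights, let $T_{(1)}<\cdots<T_{(n)}$ be the ordered observed times and let $X_{[i]},\delta_{[i]},\xi_{[i]},\nu_{[i]},B_{h[i]}(x)$ denote the quantities attached to the observation with time $T_{(i)}$. Define $$\widehat S_h^c(t\mid x)=\prod_{i=1}^{n}\left\{1-\frac{\delta_{[i]}B_{h[i]}(x)\mathbf 1(T_{(i)}\le t)}{\sum_{j=i}^{n}B_{h[j]}(x)+\sum_{j=1}^{i-1}B_{h[j]}(x)\mathbf 1(\xi_{[j]}\nu_{[j]}=1)}\right\}$$ and Beran's estimator $$\widehat S_h(t\mid x)=\prod_{i=1}^{n}\left\{1-\frac{\delta_{[i]}B_{h[i]}(x)\mathbf 1(T_{(i)}\le t)}{\sum_{j=i}^{n}B_{h[j]}(x)}\right\}$$ (all denominators assumed nonzero). Then: 1. If $\xi_i\nu_i=0$ for all $i=1,\ldots,n$, then $\widehat S_h^c(t\mid x)=\widehat S_h(t\mid x)$ for all $t$. 2. If there is a fixed known cure threshold $d$ such that, for every $i$, $\xi_i\nu_i=1$ if and only if $T_i\ge d$, then $\widehat S_h^c(t\mid x)=\widehat S_h(t\mid x)$ for all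 $t$. 3. If there is no censoring, i.e. the sample consists of $n_1$ uncured individuals with $\delta_i=1$, $\xi_i\nu_i=0$, $T_i=Y_i<\infty$, and $m=n-n_1$ cured individuals with $Y_i=\infty$, known cure status $\xi_i\nu_i=1$, $\delta_i=0$ and observed times larger than all those of the uncured individuals, then for all finite $t$ below these cured times, $\widehat S_h^c(t\mid x)=\sum_{i=1}^{n}B_{h[i]}(x)\mathbf 1(T_{(i)}>t)$. 4. In the unconditional setting, i.e. with all weights equal to $1/n$, the estimator becomes $\widehat S_n^c(t)=\prod_{i=1}^{n}\left\{1-\frac{\delta_{[i]}\mathbf 1(T_{(i)}\le t)}{n-i+1+\sum_{j=1}^{i-1}\mathbf 1(\xi_{[j]}\nu_{[j]}=1)}\right\}$; and if moreover there is a fixed known $d$ such that an individual is known to be cured if and only if its observed time is at least $d$, then $\widehat S_n^c(t)=\prod_{i=1}^{n}\left\{1-\frac{\delta_{[i]}\mathbf 1(T_{(i)}\le t)}{n-i+1}\right\}$ (the generalized maximum likelihood estimator of Laska and Meisner).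
   Context: Mixture cure model: $Y\in(0,\infty]$ is the survival time, with $Y=\infty$ meaning the subject is cured; $\nu=\mathbf 1(Y=\infty)$ is the cure indicator; $C$ is a censoring time; $X$ is a real covariate. One observes $T=\min(Y,C)$, $\delta=\mathbf 1(Y\le C)$, an indicator $\xi$ of whether the cure status is known ($\xi=1$ known), and $\xi\nu$. Observed individuals fall into three groups: uncured with observed event ($\delta=1,\xi=1,\xi\nu=0$), censored with unknown cure status ($\delta=0,\xi=0,\xi\nu=0$), censored and known to be cured ($\delta=0,\xi=1,\xi\nu=1$). *)

From mathcomp Require Import all_boot all_order all_algebra.
Set Implicit Arguments. Unset Strict Implicit. Unset Printing Implicit Defensive.
Import Order.TTheory GRing.Theory Num.Theory.
Local Open Scope ring_scope.

(* Observations are indexed by 'I_n.  [s : 'I_n -> 'I_n] is the ordering map: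
   s k is the (original) index of the observation with the (k+1)-th smallest
   observed time, i.e. T_(k+1) = T (s k), X_[k+1] = X (s k), etc.
   Positions k are 0-based: paper's i corresponds to k = i-1. *)

(* The three observable groups of the mixture cure model with partially known
   cure status: (delta, xi, xi*nu) in {(1,1,0); (0,0,0); (0,1,1)}. *)
Definition valid_obs n (delta xi xinu : 'I_n -> bool) : Prop :=
  forall i : 'I_n,
    [/\ delta i, xi i & ~~ xinu i] \/
    [/\ ~~ delta i, ~~ xi i & ~~ xinu i] \/
    [/\ ~~ delta i, xi i & xinu i].

Definition Kh (R : realFieldType) (K : R -> R) (h u : R) : R := K (u / h) / h.

Definition NW_den (R : realFieldType) n (K : R -> R) (h : R) (X : 'I_n -> R)
  (x : R) : R := \sum_(j < n) Kh K h (x - X j).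

Definition NW (R : realFieldType) n (K : R -> R) (h : R) (X : 'I_n -> R)
  (x : R) (i : 'I_n) : R := Kh K h (x - X i) / NW_den K h X x.

Definition cure_den (R : realFieldType) n (B : 'I_n -> R) (xinu : 'I_n -> bool)
  (s : 'I_n -> 'I_n) (k : 'I_n) : R :=
  \sum_(j < n | (k <= j)%N) B (s j) + \sum_(j < n | (j < k)%N) B (s j) * (xinu (s j))%:R.

Definition beran_den (R : realFieldType) n (B : 'I_n -> R) (s : 'I_n -> 'I_n)
  (k : 'I_n) : R := \sum_(j < n | (k <= j)%N) B (s j).

Definition Sc_gen (R : realFieldType) n (B : 'I_n -> R) (T : 'I_n -> R)
  (delta xinu : 'I_n -> bool) (s : 'I_n -> 'I_n) (t : R) : R :=
  \prod_(k < n)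
     (1 - (delta (s k))%:R * B (s k) * (T (s k) <= t)%R%:R / cure_den B xinu s k).

Definition Sb_gen (R : realFieldType) n (B : 'I_n -> R) (T : 'I_n -> R)
  (delta : 'I_n -> bool) (s : 'I_n -> 'I_n) (t : R) : R :=
  \prod_(k < n)
     (1 - (delta (s k))%:R * B (s k) * (T (s k) <= t)%R%:R / beran_den B s k).

Definition Sc_h (R : realFieldType) n (K : R -> R) (h : R) (X T : 'I_n -> R)
  (delta xinu : 'I_n -> bool) (s : 'I_n -> 'I_n) (t x : R) : R :=
  Sc_gen (NW K h X x) T delta xinu s t.

Definition Beran_h (R : realFieldType) n (K : R -> R) (h : R) (X T : 'I_n -> R)
  (delta : 'I_n -> bool) (s : 'I_n -> 'I_n) (t x : R) : R :=
  Sb_gen (NW K h X x) T delta s t.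

Definition Sc_n (R : realFieldType) n (T : 'I_n -> R)
  (delta xinu : 'I_n -> bool) (s : 'I_n -> 'I_n) (t : R) : R :=
  Sc_gen (fun _ : 'I_n => (n%:R)^-1) T delta xinu s t.

(* An event factor of the cure-adapted estimator differs from Beran's only
   through the weights of earlier individuals known to be cured.  When every
   known cure time exceeds every event time (nobody known cured, a known cure
   threshold, or no censoring) these weights vanish and the two estimators
   coincide.  Without censoring Beran's product telescopes: writing
   D_k = sum_(j >= k) B_[j], the factor at an event T_(k) <= t is
   D_(k+1) / D_k, so the product is the weight of the individuals still alive
   at t.  With equal weights 1/n the common factor cancels in every ratio. *)

From mathcomp Require Import all_boot all_order all_algebra.
Set Implicit Arguments. Unset Strict Implicit. Unset Printing Implicit Defensive.
Import Order.TTheory GRing.Theory Num.Theory.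
Local Open Scope ring_scope.

Definition cured_after_events {R : realFieldType} {n} (T : 'I_n -> R)
  (delta xinu : 'I_n -> bool) : Prop :=
  forall i j, xinu i -> delta j -> T j < T i.

Lemma valid_obs_event_uncured n (delta xi xinu : 'I_n -> bool) i :
  valid_obs delta xi xinu -> delta i -> ~~ xinu i.
Proof. by move=> obs di; case: (obs i) => [[]|[[]|[]]] //; rewrite di. Qed.

Lemma threshold_cured_after_events (R : realFieldType) n (T : 'I_n -> R)
    (delta xinu : 'I_n -> bool) (d : R) :
  (forall i, delta i -> ~~ xinu i) -> (forall i, xinu i = (d <= T i)) ->
  cured_after_events T delta xinu.
Proof.
move=> event_uncured thr i j; rewrite thr => le_dTi /event_uncured.
by rewrite thr -ltNge => /lt_le_trans; apply.
Qed.

Section SortedTimes.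
Variables (R : realFieldType) (n : nat) (T : 'I_n -> R) (s : 'I_n -> 'I_n).
Hypothesis Ts_lt : forall k l : 'I_n, (k < l)%N -> T (s k) < T (s l).

Lemma sorted_ltW (k l : 'I_n) : (k <= l)%N -> T (s k) <= T (s l).
Proof.
rewrite leq_eqVlt => /orP[/eqP/val_inj -> // | lt_kl].
exact/ltW/Ts_lt.
Qed.

Lemma sorted_lt_inj : injective s.
Proof.
move=> k l eq_s; apply: val_inj.
by case: (ltngtP k l) => // lt_kl; have := Ts_lt lt_kl; rewrite eq_s ltxx.
Qed.

End SortedTimes.

Lemma sum_NW (R : realFieldType) n (K : R -> R) (h : R) (X : 'I_n -> R) x :
  NW_den K h X x != 0 -> \sum_i NW K h X x i = 1.
Proof. by move=> den_neq0; rewrite -mulr_suml divff. Qed.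

Lemma sum_ord_geq_const (V : nmodType) n k (c : V) :
  \sum_(j < n | (k <= j)%N) c = c *+ (n - k).
Proof. by rewrite -(big_geq_mkord _ _ xpredT (fun=> c)) sumr_const_nat. Qed.

Lemma cure_den_const (R : realFieldType) n (c : R) xinu (s : 'I_n -> 'I_n) k :
  cure_den (fun=> c) xinu s k
  = c * ((n - k)%:R + \sum_(j < n | (j < k)%N) (xinu (s j))%:R).
Proof. by rewrite /cure_den sum_ord_geq_const mulrDr mulr_natr mulr_sumr. Qed.

Lemma beran_den_const (R : realFieldType) n (c : R) (s : 'I_n -> 'I_n) k :
  beran_den (fun=> c) s k = c * (n - k)%:R.
Proof. by rewrite /beran_den sum_ord_geq_const mulr_natr. Qed.

Lemma Sc_n_unit_weights (R : realFieldType) n (T : 'I_n -> R) delta xinu s t :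
  Sc_n T delta xinu s t = Sc_gen (fun=> 1) T delta xinu s t.
Proof.
apply: eq_bigr => k _; rewrite !cure_den_const mul1r mulr1.
have n_inv_neq0 : (n%:R : R)^-1 != 0.
  by rewrite invr_eq0 pnatr_eq0 -lt0n (leq_ltn_trans _ (ltn_ord k)).
set c := _^-1; rewrite [_ * c]mulrC -[c * _ * _]mulrA.
by rewrite -mulf_div divff // mul1r.
Qed.

Section Estimators.
Variables (R : realFieldType) (n : nat) (T : 'I_n -> R).
Variables (delta xinu : 'I_n -> bool) (s : 'I_n -> 'I_n).
Hypothesis Ts_le : forall k l : 'I_n, (k <= l)%N -> T (s k) <= T (s l).

Lemma cure_den_event (B : 'I_n -> R) (k : 'I_n) :
  cured_after_events T delta xinu -> delta (s k) ->
  cure_den B xinu s k = beran_den B s k.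
Proof.
move=> cured dk; rewrite /cure_den [\sum_(j < n | (j < k)%N) _]big1 ?addr0 //.
move=> j lt_jk; case xj: (xinu (s j)); last by rewrite mulr0.
by have := cured _ _ xj dk; rewrite ltNge Ts_le ?(ltnW lt_jk).
Qed.

Lemma Sc_gen_Sb_gen (B : 'I_n -> R) (t : R) :
  cured_after_events T delta xinu ->
  Sc_gen B T delta xinu s t = Sb_gen B T delta s t.
Proof.
move=> cured; apply: eq_bigr => k _.
case dk: (delta (s k)); last by rewrite !mul0r.
by rewrite cure_den_event.
Qed.

Section Uncensored.
Variables (B : 'I_n -> R) (t : R).
Hypothesis event_before_t : forall k, T (s k) <= t -> delta (s k).
Hypothesis beran_den_neq0 : forall k, T (s k) <= t -> beran_den B s k != 0.

Let tail m := \sum_(j < n | (m <= j)%N) B (s j).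
Let remaining m := \sum_(j < n | (m <= j)%N || (t < T (s j))) B (s j).
Let factor k :=
  1 - (delta (s k))%:R * B (s k) * (T (s k) <= t)%R%:R / beran_den B s k.

Lemma tailS (k : 'I_n) : tail k = B (s k) + tail k.+1.
Proof.
rewrite /tail (bigD1 k) //=; congr (_ + _); apply: eq_bigl => j.
by rewrite -(inj_eq val_inj) /=; case: ltngtP.
Qed.

Lemma remaining_tail m :
  (forall j : 'I_n, (j < m)%N -> T (s j) <= t) -> remaining m = tail m.
Proof.
move=> before_t; apply: eq_bigl => j.
by case: leqP => //= lt_jm; rewrite ltNge before_t.
Qed.

Lemma factor_remaining (k : 'I_n) : factor k * remaining k = remaining k.+1.
Proof.
have [le_Tt | lt_tT] := leP (T (s k)) t; last first.
  rewrite /factor leNgt lt_tT mulr0 mul0r subr0 mul1r.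
  apply: eq_bigl => j.
  by case: (ltngtP k j) => //= /val_inj <-; rewrite lt_tT.
rewrite !remaining_tail => [|j lt_jk|j lt_jk]; last 2 first.
- by rewrite (le_trans _ le_Tt) ?Ts_le.
- by rewrite (le_trans _ le_Tt) ?Ts_le // ltnW.
rewrite /factor event_before_t // le_Tt mulr1 mul1r mulrBl mul1r.
rewrite divfK ?beran_den_neq0 //.
by rewrite tailS addrAC subrr add0r.
Qed.

Lemma prod_factor_remaining m :
  (m <= n)%N -> \prod_(k < n | (k < m)%N) factor k * tail 0 = remaining m.
Proof.
elim: m => [|m IHm] le_mn.
  by rewrite big_pred0 // mul1r /tail /remaining; apply: eq_bigl.
rewrite (bigD1 (Ordinal le_mn)) /=; last exact: ltnSn.
rewrite -mulrA (eq_bigl (fun k : 'I_n => (k < m)%N)) => [|k]; last first.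
  by rewrite -(inj_eq val_inj) /= ltnS; case: ltngtP.
rewrite IHm; [exact: factor_remaining | exact: ltnW].
Qed.

Lemma Sb_gen_uncensored :
  Sb_gen B T delta s t * \sum_(k < n) B (s k)
  = \sum_(k < n) B (s k) * (t < T (s k))%R%:R.
Proof.
have -> : \sum_(k < n) B (s k) = tail 0 by apply: eq_bigl.
transitivity (remaining n).
  rewrite -(prod_factor_remaining (leqnn n)); congr (_ * _).
  by apply: eq_bigl => k; rewrite ltn_ord.
rewrite /remaining big_mkcond; apply: eq_bigr => k _.
by rewrite leqNgt ltn_ord /=; case: (t < T (s k)); rewrite ?mulr1 ?mulr0.
Qed.

End Uncensored.

Lemma Sc_gen_no_censoring (B : 'I_n -> R) (t : R) :
  \sum_(k < n) B (s k) = 1 -> cured_after_events T delta xinu ->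
  (forall k, cure_den B xinu s k != 0) ->
  (forall k, T (s k) <= t -> delta (s k)) ->
  Sc_gen B T delta xinu s t = \sum_(k < n) B (s k) * (t < T (s k))%R%:R.
Proof.
move=> sumB1 cured cden_neq0 event_before_t.
have beran_den_neq0 k : T (s k) <= t -> beran_den B s k != 0.
  by move=> /event_before_t dk; rewrite -cure_den_event.
rewrite (Sc_gen_Sb_gen _ _ cured).
by rewrite -(Sb_gen_uncensored event_before_t beran_den_neq0) sumB1 mulr1.
Qed.

End Estimators.

Theorem proposition1 (R : realFieldType) (n : nat)
  (X T : 'I_n -> R) (delta xi xinu : 'I_n -> bool)
  (K : R -> R) (h : R) (s : 'I_n -> 'I_n) :
  0 < h ->
  valid_obs delta xi xinu ->
  injective T ->
  (forall k l : 'I_n, (k < l)%N -> T (s k) < T (s l)) ->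
  [/\
   (* 1. no individual known to be cured *)
   (forall x t : R,
      NW_den K h X x != 0 ->
      (forall k, cure_den (NW K h X x) xinu s k != 0) ->
      (forall k, beran_den (NW K h X x) s k != 0) ->
      (forall i, xinu i = false) ->
      Sc_h K h X T delta xinu s t x = Beran_h K h X T delta s t x),
   (* 2. known cure threshold d *)
   (forall d x t : R,
      NW_den K h X x != 0 ->
      (forall k, cure_den (NW K h X x) xinu s k != 0) ->
      (forall k, beran_den (NW K h X x) s k != 0) ->
      (forall i, xinu i = (d <= T i)) ->
      Sc_h K h X T delta xinu s t x = Beran_h K h X T delta s t x),
   (* 3. no censoring *)
   (forall x t : R,
      NW_den K h X x != 0 ->
      (forall k, cure_den (NW K h X x) xinu s k != 0) ->
      (forall i, (delta i && ~~ xinu i) || (~~ delta i && xinu i)) ->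
      (forall i j, xinu i -> ~~ xinu j -> T j < T i) ->
      (forall i, xinu i -> t < T i) ->
      Sc_h K h X T delta xinu s t x =
        \sum_(k < n) NW K h X x (s k) * (t < T (s k))%R%:R) &
   (* 4. unconditional setting *)
   (forall t : R,
      Sc_n T delta xinu s t =
        \prod_(k < n)
          (1 - (delta (s k))%:R * (T (s k) <= t)%R%:R /
                 ((n - k)%:R + \sum_(j < n | (j < k)%N) (xinu (s j))%:R)))
   /\
   (forall d t : R,
      (forall i, xinu i = (d <= T i)) ->
      Sc_n T delta xinu s t =
        \prod_(k < n)
          (1 - (delta (s k))%:R * (T (s k) <= t)%R%:R / (n - k)%:R))].
Proof.
move=> _ obs _ Ts_lt; have Ts_le := sorted_ltW Ts_lt.
have event_uncured i : delta i -> ~~ xinu i by exact: valid_obs_event_uncured.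
have cured_thr d :
  (forall i, xinu i = (d <= T i)) -> cured_after_events T delta xinu.
  exact: threshold_cured_after_events.
split.
- move=> x t _ _ _ no_cure; apply: (Sc_gen_Sb_gen Ts_le) => i j.
  by rewrite no_cure.
- move=> d x t _ _ _ /cured_thr cured.
  exact: (Sc_gen_Sb_gen Ts_le _ _ cured).
- move=> x t den_neq0 cden_neq0 no_censoring cured_late cured_after_t.
  have cured : cured_after_events T delta xinu.
    move=> i j xinu_i delta_j; apply: cured_late xinu_i _.
    by case/orP: (no_censoring j) => /andP[]; rewrite delta_j.
  apply: (Sc_gen_no_censoring Ts_le _ cured cden_neq0) => [|k le_Tt].
    by rewrite -[RHS](sum_NW den_neq0) [RHS](reindex_inj (sorted_lt_inj Ts_lt)).
  case/orP: (no_censoring (s k)) => /andP[// _ xk].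
  by have := cured_after_t _ xk; rewrite ltNge le_Tt.
- split=> [t | d t /cured_thr cured]; rewrite Sc_n_unit_weights.
    by apply: eq_bigr => k _; rewrite cure_den_const mul1r mulr1.
  rewrite (Sc_gen_Sb_gen Ts_le _ _ cured).
  by apply: eq_bigr => k _; rewrite beran_den_const mul1r mulr1.
Qed.
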